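(* Let $M$ be a structure in a relational language with finitely many constant symbols, and $n\in\omega$. Suppose $\mathrm{Age}(M)$ is $(n+1)$-wqo. If $M^*$ is an expansion of $M$ by finitely many constants, then $\mathrm{Age}(M^* )$ is $n$-wqo.
   Context: $\mathrm{Age}(M)$ is the class of isomorphism types of finite substructures of $M$, quasi-ordered by embeddability; it is wqo if it contains no infinite antichain. $\mathrm{Age}(M)$ is $n$-wqo if $\mathrm{Age}(M')$ is wqo for every expansion $M'$ of $M$ by $n$ unary predicates partitioning the universe. *)

From Stdlib Require List.
From mathcomp Require Import all_boot.

Set Implicit Arguments.
Unset Strict Implicit.
Unset Printing Implicit Defensive.

Record language := Language {
  rsym : Type;
  arity : rsym -> nat;
  ncst : nat }.

Record structure (L : language) := Structure {
  dom : Type;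
  rel : forall r : rsym L, ('I_(arity r) -> dom) -> Prop;
  cst : 'I_(ncst L) -> dom }.

Arguments rel {L} s r _.
Arguments cst {L} s _.

Section Age.
Variables (L : language) (M : structure L).

(* Finite substructures of M: finite subsets of the universe closed
   under the constants (the language is relational apart from constants). *)
Definition finsub (A : dom M -> Prop) : Prop :=
  (exists s : list (dom M), forall x, A x -> List.In x s) /\
  (forall c, A (cst M c)).

Definition embeds (A B : dom M -> Prop) : Prop :=
  exists f : dom M -> dom M,
    (forall x, A x -> B (f x)) /\
    (forall x y, A x -> A y -> f x = f y -> x = y) /\
    (forall (r : rsym L) (t : 'I_(arity r) -> dom M),
        (forall i, A (t i)) -> (rel M r t <-> rel M r (fun i => f (t i)))) /\
    (forall c, f (cst M c) = cst M c).

(* Age(M) (isomorphism types of finite substructures, quasi-ordered by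
   embeddability) is wqo: it has no infinite antichain. *)
Definition age_wqo : Prop :=
  ~ exists A : nat -> (dom M -> Prop),
      (forall i, finsub (A i)) /\
      (forall i j, i <> j -> ~ embeds (A i) (A j)).
End Age.

Definition col_lang (L : language) (n : nat) : language :=
  @Language (rsym L + 'I_n)%type
    (fun s => match s with inl r => arity r | inr _ => 1 end) (ncst L).

(* Expansion of M by n unary predicates partitioning the universe,
   given by col : x |-> the unique predicate containing x. *)
Definition col_exp (L : language) (M : structure L) (n : nat)
  (col : dom M -> 'I_n) : structure (col_lang L n) :=
  @Structure (col_lang L n) (dom M)
    (fun s => match s as s0 return ('I_(@arity (col_lang L n) s0) -> dom M) -> Prop with
              | inl r => fun t => rel M r t
              | inr i => fun t => col (t ord0) = i
              end)
    (cst M).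
Arguments col_exp {L} M {n} col.

Definition age_nwqo (L : language) (M : structure L) (n : nat) : Prop :=
  forall col : dom M -> 'I_n, age_wqo (col_exp M col).

Definition cst_lang (L : language) (k : nat) : language :=
  @Language (rsym L) (@arity L) (ncst L + k).

Definition cst_exp (L : language) (M : structure L) (k : nat)
  (d : 'I_k -> dom M) : structure (cst_lang L k) :=
  @Structure (cst_lang L k) (dom M) (rel M)
    (fun c => match split c with inl i => cst M i | inr j => d j end).
Arguments cst_exp {L} M {k} d.

From Stdlib Require Import ClassicalEpsilon Classical.
From Pilot Require Import Defs.
From mathcomp Require Import all_boot zify.

(* Expanding by constants costs one colour.

   Let col colour M* = (M, d_0, ..., d_(k-1)) with n colours and suppose
   (A_i) were an infinite antichain of finite substructures of (M*, col).
   Recolour M with n+1 colours by giving the points d_j the new colour n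
   ([mark]).  Every A_i contains all d_j and is a finite substructure of
   (M, mark), and an embedding of (M, mark) that fixes every d_j is an
   embedding of (M*, col) ([fixing_emb]).  Since Age(M, mark) is wqo, a
   Ramsey-type argument ([monotone_chain]) yields a chain of N + 1 of the
   A_i, N = k^k, successively embedded in one another in (M, mark).  These
   embeddings send marked points injectively to marked points; composing
   them up to the top of the chain and applying the pigeonhole principle
   to maps 'I_k -> 'I_k ([pigeonhole_range]) yields two members of the
   chain and an embedding between them fixing every d_j
   ([chain_fixes_constants]), contradicting the antichain property. *)

Definition increasing (g : nat -> nat) : Prop := forall t, g t < g t.+1.

Lemma increasing_lt {g : nat -> nat} :
  increasing g -> forall a b, a < b -> g a < g b.
Proof.
move=> gi a; elim=> // b IH; rewrite ltnS leq_eqVlt => /orP [/eqP -> | ab].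
  exact: gi.
exact: ltn_trans (IH ab) (gi b).
Qed.

Lemma increasing_comp {g h : nat -> nat} :
  increasing g -> increasing h -> increasing (g \o h).
Proof. by move=> gi hi t; apply: increasing_lt gi _ _ (hi t). Qed.

Lemma dependent_chain (Q : nat -> Prop) (S : nat -> nat -> Prop) i0 :
  Q i0 -> (forall i, Q i -> exists j, [/\ i < j, Q j & S i j]) ->
  exists g, increasing g /\ forall t, Q (g t) /\ S (g t) (g t.+1).
Proof.
move=> Qi0 step.
have next (x : {i | Q i}) : {j | [/\ sval x < j, Q j & S (sval x) j]}.
  apply: constructive_indefinite_description; case: x => i /= /step [j [? ? ?]].
  by exists j.
pose nx (x : {i | Q i}) : {i | Q i} :=
  exist _ (sval (next x)) (let: And3 _ Qj _ := svalP (next x) in Qj).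
exists (fun t => sval (iter t nx (exist _ i0 Qi0))); split=> [t | t].
  by case: (svalP (next (iter t nx (exist _ i0 Qi0)))).
split; first exact: svalP.
by case: (svalP (next (iter t nx (exist _ i0 Qi0)))).
Qed.

Lemma chain_or_free (S : nat -> nat -> Prop) :
  (exists g, increasing g /\ forall t, S (g t) (g t.+1)) \/
  (exists g, increasing g /\ forall a b, a < b -> ~ S (g a) (g b)).
Proof.
case: (classic (exists N, forall i, N <= i -> exists j, i < j /\ S i j)).
  move=> [N succ]; left.
  have [|g [gi Hg]] := dependent_chain (fun i => N <= i) S N (leqnn N).
    move=> i Ni; have [j [ij Sij]] := succ i Ni.
    by exists j; split=> //; apply: leq_trans Ni (ltnW ij).
  by exists g; split=> // t; case: (Hg t).
move=> no_tail; right.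
pose free i := ~ exists j, i < j /\ S i j.
have free_after N : exists i, N <= i /\ free i.
  apply: NNPP => H; apply: no_tail; exists N => i Ni.
  by apply: NNPP => Hi; apply: H; exists i.
have [i0 [_ free_i0]] := free_after 0.
have [|g [gi Hg]] := dependent_chain free (fun _ _ => True) i0 free_i0.
  by move=> i _; have [j [ij free_j]] := free_after i.+1; exists j.
exists g; split=> // a b ab Sab; case: (Hg a) => free_ga _; apply: free_ga.
by exists (g b); split=> //; apply: increasing_lt.
Qed.

Lemma monotone_chain (R : nat -> nat -> Prop) :
  (forall h, increasing h -> exists a b, a <> b /\ R (h a) (h b)) ->
  exists g, increasing g /\
    ((forall t, R (g t) (g t.+1)) \/ (forall t, R (g t.+1) (g t))).
Proof.
move=> no_free.
have [[g [gi Rg]] | [g [gi noRg]]] := chain_or_free R.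
  by exists g; split; [|left].
have [[h [hi Rgh]] | [h [hi noRgh]]] :=
  chain_or_free (fun t t' => R (g t') (g t)).
  by exists (g \o h); split; [exact: increasing_comp | right].
have [a [b [ab Rab]]] := no_free (g \o h) (increasing_comp gi hi).
exfalso; case: (ltngtP a b) => [lt | gt | eq].
- exact: (noRg (h a) (h b) (increasing_lt hi _ _ lt) Rab).
- exact: (noRgh b a gt Rab).
- by case: ab.
Qed.

Lemma pigeonhole_range {X : Type} {k N : nat} (d : 'I_k -> X)
    (p : nat -> 'I_k -> X) :
  #|{ffun 'I_k -> 'I_k}| <= N ->
  (forall m j, m <= N -> exists i, d i = p m j) ->
  exists m m', [/\ m < m', m' <= N & forall j, p m j = p m' j].
Proof.
move=> leN in_range.
have idx (m : 'I_N.+1) (j : 'I_k) : {i | d i = p m j}.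
  by apply: constructive_indefinite_description; apply: in_range; rewrite -ltnS.
pose c (m : 'I_N.+1) : {ffun 'I_k -> 'I_k} := [ffun j => sval (idx m j)].
have [m [m' [Ec neq]]] : exists m m' : 'I_N.+1, c m = c m' /\ m <> m'.
  apply: NNPP => H; have c_inj : injective c.
    by move=> m m' E; apply: NNPP => neq; apply: H; exists m, m'.
  by have := leq_card c c_inj; rewrite card_ord ltnNge leN.
have same j : p m j = p m' j.
  have := congr1 (fun f : {ffun 'I_k -> 'I_k} => f j) Ec.
  rewrite /c /= !ffunE => E.
  by rewrite -(svalP (idx m j)) -(svalP (idx m' j)) E.
case: (ltngtP m m') => [lt | gt | /val_inj //].
  by exists m, m'; split=> //; rewrite -ltnS.
by exists m', m; split=> //; rewrite -ltnS.
Qed.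

Lemma bounded_choice {T : Type} (t0 : T) (P : nat -> T -> Prop) (N : nat) :
  (forall s, s < N -> exists f, P s f) ->
  exists F : nat -> T, forall s, s < N -> P s (F s).
Proof.
move=> HP; have HP' s : exists f, s < N -> P s f.
  by case: (ltnP s N) => [/HP [f Pf] | _]; [exists f | exists t0].
exists (fun s => sval (constructive_indefinite_description _ (HP' s))).
by move=> s; apply: (svalP (constructive_indefinite_description _ (HP' s))).
Qed.

Definition is_emb (L : language) (S : structure L) (A B : dom S -> Prop)
    (f : dom S -> dom S) : Prop :=
  [/\ forall x, A x -> B (f x),
      forall x y, A x -> A y -> f x = f y -> x = y,
      forall (r : rsym L) (t : 'I_(arity r) -> dom S),
        (forall i, A (t i)) ->
        (Defs.rel S r t <-> Defs.rel S r (fun i => f (t i)))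
    & forall c, f (cst S c) = cst S c].
Arguments is_emb {L S}.

Lemma embedsP (L : language) (S : structure L) (A B : dom S -> Prop) :
  embeds A B <-> exists f, is_emb A B f.
Proof.
split=> [[f [f1 [f2 [f3 f4]]]] | [f [f1 f2 f3 f4]]]; exists f; first by split.
by split; [|split; [|split]].
Qed.

Lemma is_emb_id (L : language) (S : structure L) (A : dom S -> Prop) :
  is_emb A A id.
Proof. by split. Qed.

Lemma is_emb_comp (L : language) (S : structure L) (A B C : dom S -> Prop) f g :
  is_emb A B f -> is_emb B C g -> is_emb A C (g \o f).
Proof.
move=> [f1 f2 f3 f4] [g1 g2 g3 g4]; split=> [x Ax | x y Ax Ay E | r t At | c] /=.
- exact/g1/f1.
- by apply: f2 => //; apply: g2 => //; apply: f1.
- by rewrite (f3 r t At); apply: (g3 r (f \o t)) => i; apply: f1.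
- by rewrite f4 g4.
Qed.

Fixpoint chain_map {T : Type} (F : nat -> T -> T) (t m : nat) : T -> T :=
  if t is t'.+1 then chain_map F t' m.+1 \o F m else id.

Lemma chain_map_add (T : Type) (F : nat -> T -> T) t1 t2 m x :
  chain_map F (t1 + t2) m x = chain_map F t2 (m + t1) (chain_map F t1 m x).
Proof.
by elim: t1 m x => [|t1 IH] m x /=; rewrite ?addn0 // IH addSnnS.
Qed.

Lemma chain_map_emb (L : language) (S : structure L) (B : nat -> dom S -> Prop)
    (F : nat -> dom S -> dom S) (N : nat) :
  (forall s, s < N -> is_emb (B s) (B s.+1) (F s)) ->
  forall t m, m + t <= N -> is_emb (B m) (B (m + t)) (chain_map F t m).
Proof.
move=> HF; elim=> [|t IH] m le_N /=; first by rewrite addn0; apply: is_emb_id.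
apply: (@is_emb_comp _ _ _ (B m.+1)); first by apply: HF; lia.
by rewrite -addSnnS; apply: IH; lia.
Qed.

Section MarkConstants.
Variables (L : language) (M : structure L) (n k : nat).
Variables (d : 'I_k -> dom M) (col : dom M -> 'I_n).

Definition is_const (x : dom M) : Prop := exists j, d j = x.

Definition mark (x : dom M) : 'I_n.+1 :=
  if excluded_middle_informative (is_const x) then ord_max
  else widen_ord (leqnSn n) (col x).

Local Notation Mmark := (col_exp M mark).
Local Notation Mstar := (col_exp (cst_exp M d) col).

Lemma mark_const x : is_const x -> mark x = ord_max.
Proof. by rewrite /mark; case: excluded_middle_informative. Qed.

Lemma mark_nconst x : ~ is_const x -> mark x = widen_ord (leqnSn n) (col x).
Proof. by rewrite /mark; case: excluded_middle_informative. Qed.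

Lemma mark_ord_max x : mark x = ord_max -> is_const x.
Proof.
move=> E; apply: NNPP => nc; move: E; rewrite mark_nconst // => /(congr1 val) /=.
by move=> E; move: (ltn_ord (col x)); rewrite E ltnn.
Qed.

Lemma is_emb_mark {A B : dom M -> Prop} {f x} :
  @is_emb _ Mmark A B f -> A x -> mark (f x) = mark x.
Proof.
case=> _ _ f3 _ Ax.
by have [/(_ erefl)] := f3 (inr (mark x)) (fun _ => x) (fun _ => Ax).
Qed.

Lemma is_emb_const {A B : dom M -> Prop} {f x} :
  @is_emb _ Mmark A B f -> A x -> is_const x -> is_const (f x).
Proof.
by move=> emb Ax cx; apply: mark_ord_max; rewrite (is_emb_mark emb Ax) mark_const.
Qed.

Lemma fixing_emb {A B : dom M -> Prop} {f} :
  @is_emb _ Mmark A B f -> (forall j, f (d j) = d j) -> @embeds _ Mstar A B.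
Proof.
move=> emb fix_d; have [f1 f2 f3 f4] := emb.
apply/embedsP; exists f; split=> // [[r | i] t At | c] /=.
- exact: (f3 (inl r) t At).
- have [[j <-] | nc] := classic (is_const (t ord0)); first by rewrite fix_d.
  have nc' : ~ is_const (f (t ord0)).
    by move=> /mark_const; rewrite (is_emb_mark emb (At ord0)) => /mark_ord_max.
  have := is_emb_mark emb (At ord0).
  rewrite !mark_nconst // => /(congr1 val) /= E.
  by rewrite (val_inj E).
- by case: (split c) => [i | j]; [exact: f4 | exact: fix_d].
Qed.

Lemma finsub_star (A : dom M -> Prop) :
  @finsub _ Mstar A -> @finsub _ Mmark A /\ forall j, A (d j).
Proof.
case=> fin cstA; split; first split=> // c.
  have := cstA (lshift k c).
  by rewrite /= -[lshift k c]/(unsplit (inl c)) unsplitK.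
move=> j; have := cstA (rshift _ j).
by rewrite /= -[rshift _ j]/(unsplit (inr j)) unsplitK.
Qed.

Lemma chain_fixes_constants (B : nat -> dom M -> Prop) (N : nat) :
  #|{ffun 'I_k -> 'I_k}| <= N ->
  (forall m j, B m (d j)) ->
  (forall s, s < N -> @embeds _ Mmark (B s) (B s.+1)) ->
  exists m m', [/\ m < m', m' <= N & @embeds _ Mstar (B m) (B m')].
Proof.
move=> leN Bd chain.
have [F embF] : exists F, forall s, s < N -> @is_emb _ Mmark (B s) (B s.+1) (F s).
  apply: (bounded_choice id (fun s => @is_emb _ Mmark (B s) (B s.+1))).
  by move=> s /chain /embedsP.
have emb m t : m + t <= N -> @is_emb _ Mmark (B m) (B (m + t)) (chain_map F t m).
  exact: chain_map_emb.
pose Top m := chain_map F (N - m) m.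
have embTop m : m <= N -> @is_emb _ Mmark (B m) (B N) (Top m).
  by move=> le; have := emb m (N - m); rewrite subnKC //; apply.
have [|m [m' [lt le same]]] := pigeonhole_range d (fun m j => Top m (d j)) leN.
  by move=> m j le; apply: is_emb_const (embTop m le) (Bd m j) _; exists j.
have embG : @is_emb _ Mmark (B m) (B m') (chain_map F (m' - m) m).
  by have := emb m (m' - m); rewrite subnKC ?(ltnW lt) //; apply; lia.
exists m, m'; split=> //; apply: (fixing_emb embG) => j.
have [G1 _ _ _] := embG; have [_ Top_inj _ _] := embTop m' le.
apply: Top_inj; [exact: G1 | exact: Bd | rewrite -same /Top].
by rewrite (_ : N - m = (m' - m) + (N - m')) ?chain_map_add ?subnKC //; lia.
Qed.

End MarkConstants.

Arguments mark {L M n k} d col x.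
Arguments finsub_star {L M n k d col A}.
Arguments chain_fixes_constants {L M n k d col} B {N}.

Lemma wqo_pair {L : language} {S : structure L} {A : nat -> dom S -> Prop} :
  age_wqo S -> (forall i, finsub (A i)) ->
  forall h : nat -> nat, exists a b, a <> b /\ embeds (A (h a)) (A (h b)).
Proof.
move=> wqo finA h; apply: NNPP => no_pair; apply: wqo.
exists (A \o h); split=> [i | a b ab E]; first exact: finA.
by apply: no_pair; exists a, b.
Qed.

Theorem lemma5 (L : language) (M : structure L) (n : nat) :
  age_nwqo M n.+1 ->
  forall (k : nat) (d : 'I_k -> dom M), age_nwqo (cst_exp M d) n.
Proof.
move=> wqo k d col [A [finA antiA]].
pose Mmark := col_exp M (mark d col).
have [finA' constA] : (forall i, finsub (M := Mmark) (A i)) /\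
                      (forall i j, A i (d j)).
  by split=> i; have [] := finsub_star (finA i).
set N := #|{ffun 'I_k -> 'I_k}|.
have [g [gi [up | down]]] :=
  monotone_chain (fun i j => embeds (M := Mmark) (A i) (A j))
    (fun h _ => wqo_pair (wqo (mark d col)) finA' h).
- have [m [m' [lt _ emb]]] := chain_fixes_constants (M := M) (col := col)
    (A \o g) (leqnn N) (fun m => constA (g m)) (fun s _ => up s).
  by apply: antiA emb; apply/eqP; rewrite neq_ltn increasing_lt.
- have down' s : s < N -> embeds (M := Mmark) (A (g (N - s))) (A (g (N - s.+1))).
    by move=> lt; have := down (N - s.+1); rewrite subnSK.
  have [m [m' [lt le emb]]] := chain_fixes_constants (M := M) (col := col)
    (fun t => A (g (N - t))) (leqnn N) (fun m => constA _) down'.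
  by apply: antiA emb; apply/eqP; rewrite neq_ltn orbC increasing_lt //; lia.
Qed.
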